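(* Let $A$ be a finite alphabet with $|A|=k$, and let $L\subseteq A^*$ be finite and nonempty. Let $\ell$ be the length of the longest word in $L$. Then $1+k(\ell^{1/k}-2)<h(L)\leq \ell+1$.
   Context: For $n\in\mathbb{N}$, $u\sim_n v$ iff $u$ and $v$ have exactly the same (scattered) subwords of length at most $n$. A language $L$ is $n$-PT if it is a union of $\sim_n$-classes, and $h(L)$ is the least $n$ such that $L$ is $n$-PT. *)

From HB Require Import structures.
From mathcomp Require Import all_boot all_order all_algebra.
From mathcomp Require Import all_classical all_reals all_analysis.
Set Implicit Arguments. Unset Strict Implicit. Unset Printing Implicit Defensive.

(* Words over A are [seq A]; (scattered) subwords are [subseq]. *)

Definition simon_eq (A : finType) (n : nat) (u v : seq A) : Prop :=
  forall w : seq A, size w <= n -> subseq w u = subseq w v.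

Definition is_nPT (A : finType) (n : nat) (L : seq A -> Prop) : Prop :=
  forall u v : seq A, simon_eq n u v -> (L u <-> L v).

Definition is_PT_height (A : finType) (L : seq A -> Prop) (n : nat) : Prop :=
  is_nPT n L /\ forall m, is_nPT m L -> n <= m.

From HB Require Import structures.
From mathcomp Require Import all_boot all_order all_algebra.
From mathcomp Require Import all_classical all_reals all_analysis.
From mathcomp Require Import zify ring lra.
Import Order.TTheory GRing.Theory Num.Theory.

Set Implicit Arguments.
Unset Strict Implicit.
Unset Printing Implicit Defensive.

(* Upper bound: two words with the same subwords of length at most ℓ + 1, one
   of them of length at most ℓ, are equal, so L is (ℓ+1)-PT.
   Lower bound: with h = h(L), a longest word w of L is also a longest word of
   its ~_h-class.  Cut a word over an alphabet B into arches p_1 b_1 ... p_m b_m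
   followed by a remainder s missing some letter c, where b_j is the letter of
   B whose first occurrence in the j-th arch comes last.  A product of j arches
   contains every word of length j over B, so the ~_h-class is preserved when a
   piece p_j (or s) is replaced by a ~_(h-m+1)-equivalent word over the smaller
   alphabet B \ b_j (or B \ c); and m < h, since otherwise inserting c into s
   would stay in the class.  Induction on |B| and the AM-GM inequality give
   |w| + 1 <= ((h - 1)/k + 2)^k, i.e. ℓ^(1/k) < (h - 1)/k + 2. *)

Lemma subseq_cat_split (T : eqType) (u x y : seq T) : subseq u (x ++ y) ->
  exists u1 u2, [/\ u = u1 ++ u2, subseq u1 x & subseq u2 y].
Proof.
case/subseqP=> m size_m ->.
exists (mask (take (size x) m) x), (mask (drop (size x) m) y).
rewrite -mask_cat ?cat_take_drop ?mask_subseq //.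
by rewrite size_takel // size_m size_cat leq_addr.
Qed.

Lemma all_subseq (T : eqType) (P : pred T) (u w : seq T) :
  subseq u w -> all P w -> all P u.
Proof. by move=> /mem_subseq uw /allP Pw; apply/allP=> a /uw /Pw. Qed.

Lemma all_in_subset (T : finType) (C D : {set T}) (w : seq T) :
  C \subset D -> all [in C] w -> all [in D] w.
Proof. by move=> /fintype.subsetP CD /allP Cw; apply/allP=> a /Cw /CD. Qed.

Section SimonCongruence.
Variable A : finType.
Implicit Types u v w x y : seq A.

Lemma simon_eq_sym n u v : simon_eq n u v -> simon_eq n v u.
Proof. by move=> uv w /uv. Qed.

Lemma simon_eq0 u v : simon_eq 0 u v.
Proof. by move=> [|a w] // _; rewrite !sub0seq. Qed.

Lemma simon_eq_le m n u v : m <= n -> simon_eq n u v -> simon_eq m u v.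
Proof. by move=> le_mn uv w le_wm; apply: uv (leq_trans le_wm le_mn). Qed.

Lemma simon_eq_rev n u v : simon_eq n u v -> simon_eq n (rev u) (rev v).
Proof. by move=> uv w le_wn; rewrite -[w]revK !subseq_rev uv ?size_rev. Qed.

Lemma simon_eq_size_lt n u v : size u < n -> simon_eq n u v -> u = v.
Proof.
move=> lt_un uv; have vu_take : subseq (take n v) u.
  by rewrite uv; [apply: take_subseq | rewrite size_take_min geq_minl].
have lt_vn : size v < n.
  rewrite ltnNge; apply/negP => le_nv.
  by move: (size_subseq vu_take); rewrite size_takel // leqNgt lt_un.
rewrite take_oversize in vu_take; last exact: ltnW.
apply/subseq_anti; rewrite vu_take andbT.
by rewrite -(uv u) ?subseq_refl // ltnW.
Qed.

Variable B : {set A}.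

Definition universal i x := forall v, all [in B] v -> size v <= i -> subseq v x.

Lemma universal0 x : universal 0 x.
Proof. by case=> // *; rewrite sub0seq. Qed.

Lemma universal1 x : {subset B <= x} -> universal 1 x.
Proof.
move=> Bx [_ _|a [|//]]; first by rewrite sub0seq.
by rewrite /= andbT sub1seq => /Bx.
Qed.

Lemma universal_subseq i x y : subseq x y -> universal i x -> universal i y.
Proof. by move=> xy Ux v Bv le_vi; apply: subseq_trans (Ux v Bv le_vi) xy. Qed.

Lemma universal_cat i j x y :
  universal i x -> universal j y -> universal (i + j) (x ++ y).
Proof.
move=> Ux Uy v Bv le_v; rewrite -(cat_take_drop i v); apply: cat_subseq.
  apply: Ux; first exact: all_subseq (take_subseq _ _) Bv.
  by rewrite size_take_min geq_minl.
apply: Uy; last by rewrite size_drop leq_subLR.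
exact: all_subseq (drop_subseq _ _) Bv.
Qed.

Lemma universal_rev i x : universal i x -> universal i (rev x).
Proof.
by move=> Ux v Bv le_vi; rewrite -subseq_rev revK Ux ?all_rev ?size_rev.
Qed.

Lemma simon_eq_catl i n x y y' : universal i x ->
  all [in B] (x ++ y) -> all [in B] (x ++ y') -> simon_eq (n - i) y y' ->
  simon_eq n (x ++ y) (x ++ y').
Proof.
move=> Ux; suff sub y1 y2 : all [in B] (x ++ y1) -> simon_eq (n - i) y1 y2 ->
    forall u, size u <= n -> subseq u (x ++ y1) -> subseq u (x ++ y2).
  move=> By By' yy' u le_un; apply/idP/idP; first exact: sub.
  exact/sub/le_un/simon_eq_sym.
move=> By1 yy u le_un sub_u; have Bu := all_subseq sub_u By1.
have [u1 [u2 [def_u sub_u1 sub_u2]]] := subseq_cat_split sub_u; subst u.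
(* The cast makes [size u1] the same term as in [le_un], as [lia] requires. *)
have [le_u1i | lt_iu1] := leqP (size (u1 : seq A)) i; last first.
  apply: cat_subseq => //; rewrite -yy //.
  by move: le_un; rewrite size_cat; lia.
rewrite -(cat_take_drop i (u1 ++ u2)); apply: cat_subseq.
  apply: Ux; first exact: all_subseq (take_subseq _ _) Bu.
  by rewrite size_take_min geq_minl.
rewrite -yy; last by rewrite size_drop leq_sub2r.
by rewrite drop_cat ltnNge le_u1i /= (subseq_trans (drop_subseq _ _)).
Qed.

Lemma simon_eq_catr j n x x' y : universal j y ->
  all [in B] (x ++ y) -> all [in B] (x' ++ y) -> simon_eq (n - j) x x' ->
  simon_eq n (x ++ y) (x' ++ y).
Proof.
move=> Uy Bx Bx' xx'; rewrite -[x ++ y]revK -[x' ++ y]revK (rev_cat x) (rev_cat x').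
apply: simon_eq_rev; apply: (simon_eq_catl (universal_rev Uy)).
- by rewrite -rev_cat all_rev.
- by rewrite -rev_cat all_rev.
- exact: simon_eq_rev.
Qed.

Definition simon_maximal n w :=
  forall w', all [in B] w' -> simon_eq n w w' -> size w' <= size w.

Lemma simon_maximal_le m n w : m <= n -> simon_maximal m w -> simon_maximal n w.
Proof. by move=> le_mn max_w w' Bw' /(simon_eq_le le_mn); apply: max_w. Qed.

Lemma simon_maximal0 c w : c \in B -> ~ simon_maximal 0 w.
Proof.
move=> cB /(_ (nseq (size w).+1 c)); rewrite size_nseq ltnn all_nseq cB orbT.
by move/(_ isT (simon_eq0 _ _)).
Qed.

Lemma simon_maximal_infix i j n x u y : universal i x -> universal j y ->
  all [in B] (x ++ u ++ y) -> simon_maximal n (x ++ u ++ y) ->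
  simon_maximal (n - i - j) u.
Proof.
move=> Ux Uy Bw max_w u' Bu' uu'.
have Bx : all [in B] x by move: Bw; rewrite all_cat => /andP[].
have Buy : all [in B] (u ++ y) by move: Bw; rewrite all_cat => /andP[].
have Bu'y : all [in B] (u' ++ y) by move: Buy; rewrite !all_cat Bu' => /andP[].
have uyu'y : simon_eq (n - i) (u ++ y) (u' ++ y).
  exact: simon_eq_catr Uy Buy Bu'y uu'.
have := max_w (x ++ u' ++ y); rewrite !size_cat all_cat Bx Bu'y.
rewrite leq_add2l leq_add2r; apply=> //.
by apply: simon_eq_catl Ux Bw _ uyu'y; rewrite all_cat Bx.
Qed.

End SimonCongruence.

Lemma simon_maximal_subset (A : finType) (B C : {set A}) n w :
  C \subset B -> simon_maximal B n w -> simon_maximal C n w.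
Proof. by move=> CB max_w w' /(all_in_subset CB); apply: max_w. Qed.

Definition arch {T : Type} (pb : seq T * T) := rcons pb.1 pb.2.

Section Arches.
Variables (A : finType) (B : {set A}).

Definition is_arch (pb : seq A * A) :=
  [&& pb.2 \in B, all [in B :\ pb.2] pb.1 & B \subset arch pb].

Lemma all_arch pb : is_arch pb -> all [in B] (arch pb).
Proof.
case: pb => p b /and3P[/= bB Bp _]; rewrite /arch -cats1 all_cat /= bB !andbT.
exact: all_in_subset (subsetDl B [set b]) Bp.
Qed.

Lemma all_arches rs : all is_arch rs -> all [in B] (flatten (map arch rs)).
Proof. by elim: rs => //= pb rs IH /andP[/all_arch Bpb /IH]; rewrite all_cat Bpb. Qed.

Lemma universal_arches rs :
  all is_arch rs -> universal B (size rs) (flatten (map arch rs)).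
Proof.
elim: rs => [_|pb rs IH /andP[/and3P[_ _ /fintype.subsetP Bpb] /IH Urs]] /=.
  exact: universal0.
exact: universal_cat (universal1 Bpb) Urs.
Qed.

Lemma first_arch b0 w : b0 \in B -> all [in B] w -> {subset B <= w} ->
  exists p b y, w = arch (p, b) ++ y /\ is_arch (p, b).
Proof.
move=> b0B Bw Bsw.
have [b bB max_b] := @arg_maxnP _ b0 [in B] (index^~ w) b0B.
have bw := Bsw b bB; set i := index b w in max_b *.
exists (take i w), b, (drop i.+1 w); split.
  by rewrite /arch cat_rcons -(nth_index b bw) -drop_nth ?index_mem // cat_take_drop.
apply/and3P; split=> //=.
  apply/allP=> a a_take; rewrite !inE (allP Bw _ (mem_take a_take)) andbT.
  by apply: contraTneq a_take => ->; rewrite in_take // ltnn.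
apply/fintype.subsetP=> a aB; rewrite /arch mem_rcons inE.
have [//|ab /=] := eqVneq a b; have le_ai : index a w <= i := max_b a aB.
rewrite in_take ?Bsw // ltn_neqAle le_ai andbT.
by apply: contra_neq ab; apply: index_inj; rewrite ?Bsw.
Qed.

Lemma arch_decomposition c0 w : c0 \in B -> all [in B] w ->
  exists rs s c, [/\ w = flatten (map arch rs) ++ s, all is_arch rs,
                     c \in B & all [in B :\ c] s].
Proof.
move=> c0B; have [N] := ubnP (size w); elim: N w => // N IH w /ltnSE le_wN Bw.
have [/forall_inP Bsw | ] := boolP [forall c in B, c \in w]; last first.
  case/forall_inPn=> c cB cw; exists [::], w, c; split=> //.
  apply/allP=> a aw; rewrite !inE (allP Bw _ aw) andbT.
  by apply: contraNneq cw => <-.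
have [p [b [y [def_w pb_arch]]]] := first_arch c0B Bw Bsw.
have By : all [in B] y by move: Bw; rewrite def_w all_cat => /andP[].
have lt_yN : size y < N by move: le_wN; rewrite def_w size_cat /arch size_rcons; lia.
have [rs [s [c [def_y rs_arch cB Bs]]]] := IH y lt_yN By.
by exists ((p, b) :: rs), s, c; rewrite /= pb_arch rs_arch def_w def_y catA.
Qed.

End Arches.

Section SimonBound.
Variable R : realFieldType.
Local Open Scope ring_scope.

Definition simon_bound (k n : nat) : R := ((n%:R - 1) / k%:R + 2) ^+ k.

Lemma simon_base_ge0 k n : 0 <= (n%:R - 1) / k%:R + 2 :> R.
Proof.
case: k => [|k]; first by rewrite invr0 mulr0 add0r.
suff : -1 <= (n%:R - 1) / k.+1%:R :> R by set X := _ / _; lra.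
rewrite ler_pdivlMr ?ltr0Sn // mulN1r.
have := ler0n R n; have : 1 <= k.+1%:R :> R by rewrite ler1n.
set N := n%:R; set K := k.+1%:R; lra.
Qed.

Lemma AGM_mul_expr k (x y : R) : 0 <= x -> 0 <= y ->
  x * y ^+ k <= ((x + k%:R * y) / k.+1%:R) ^+ k.+1.
Proof.
move=> x0 y0; pose E (i : 'I_k.+1) := if i == ord0 then x else y.
have E_ge0 : {in 'I_k.+1, forall i, 0 <= E i} by move=> i _; rewrite /E; case: ifP.
have [] := leif_AGM E_ge0; rewrite card_ord big_ord_recl big_ord_recl /E /=.
by rewrite prodr_const sumr_const card_ord mulr_natl.
Qed.

Lemma simon_bound_step k n m : (m < n)%N ->
  m.+1%:R * simon_bound k (n - m + 1) <= simon_bound k.+1 n.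
Proof.
move=> lt_mn; rewrite /simon_bound.
have -> : (n - m + 1)%:R - 1 = n%:R - m%:R :> R.
  by rewrite natrD natrB ?(ltnW lt_mn) // addrK.
case: k => [|k].
  rewrite expr0 mulr1 expr1 invr1 mulr1; move: lt_mn; rewrite -(ltr_nat R) -natr1.
  set N := n%:R; set M := m%:R; lra.
apply: le_trans (AGM_mul_expr k.+1 (ler0n R m.+1) _) _.
  by have := simon_base_ge0 k.+1 (n - m + 1); rewrite natrD natrB ?(ltnW lt_mn) // addrK.
suff -> : (m.+1%:R + k.+1%:R * ((n%:R - m%:R) / k.+1%:R + 2)) / k.+2%:R =
          (n%:R - 1) / k.+2%:R + 2 :> R by [].
by rewrite -!natr1; field; rewrite !natr1 !pnatr_eq0.
Qed.

End SimonBound.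

Section LongestWord.
Variables (R : realFieldType) (A : finType).
Local Open Scope ring_scope.

Section InductionStep.
Variable k : nat.
Hypothesis IHk : forall (C : {set A}) n w, #|C| = k -> all [in C] w ->
  simon_maximal C n w -> (size w).+1%:R <= simon_bound R k n.
Variables (B : {set A}) (cardB : #|B| = k.+1).

Lemma arch_piece_size_le n i j x p b y : is_arch B (p, b) ->
  universal B i x -> universal B j y -> all [in B] x -> all [in B] y ->
  simon_maximal B n (x ++ p ++ b :: y) ->
  (size p).+1%:R <= simon_bound R k (n - i - j).
Proof.
move=> /and3P[/= bB Bp _] Ux Uy Bx By max_w; apply: (IHk _ Bp).
  by move: cardB; rewrite (cardsD1 b) bB => -[].
apply: simon_maximal_subset (subsetDl B [set b]) _.
apply: simon_maximal_infix Ux (universal_subseq (subseq_cons y b) Uy) _ max_w.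
by rewrite !all_cat /= Bx bB By (all_in_subset (subsetDl B [set b]) Bp).
Qed.

Lemma arches_size_le n m s rs x i : (m <= n)%N -> all (is_arch B) rs ->
  universal B i x -> all [in B] x -> all [in B] s ->
  simon_maximal B n (x ++ flatten (map arch rs) ++ s) -> (i + size rs)%N = m ->
  (size (flatten (map arch rs)))%:R <= (size rs)%:R * simon_bound R k (n - m + 1).
Proof.
elim: rs x i => [|[p b] rs IH] x i le_mn; first by rewrite mul0r.
move=> /andP[pb_arch rs_arch] Ux Bx Bs max_w def_m.
have Brs := all_arches rs_arch.
have piece : (size p).+1%:R <= simon_bound R k (n - m + 1).
  have -> : (n - m + 1 = n - i - size rs)%N by move: le_mn; rewrite -def_m /=; lia.
  apply: arch_piece_size_le pb_arch Ux _ Bx _ _.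
  - exact: universal_subseq (prefix_subseq _ s) (universal_arches rs_arch).
  - by rewrite all_cat Brs.
  - by move: max_w; rewrite /= /arch -catA cat_rcons.
have rest := IH (x ++ arch (p, b)) i.+1 le_mn rs_arch.
rewrite /= size_cat size_rcons natrD -[(size rs).+1]addn1 natrD mulrDl mul1r.
rewrite [X in _ <= X]addrC; apply: lerD piece (rest _ _ Bs _ _).
- rewrite -addn1; apply: universal_cat Ux (universal1 _).
  by case/and3P: pb_arch => _ _ /fintype.subsetP.
- by rewrite all_cat Bx all_arch.
- by move: max_w; rewrite /= -!catA.
- by rewrite -def_m /= addSnnS.
Qed.

Lemma simon_maximal_size_le_succ n w : all [in B] w -> simon_maximal B n w ->
  (size w).+1%:R <= simon_bound R k.+1 n.
Proof.
move=> Bw max_w; have /card_gt0P [c0 c0B] : (0 < #|B|)%N by rewrite cardB.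
have [rs [s [c [def_w rs_arch cB Bs]]]] := arch_decomposition c0B Bw.
have BsB : all [in B] s := all_in_subset (subsetDl B [set c]) Bs.
have [le_nm | lt_mn] := leqP n (size rs).
  pose x := flatten (map arch (take n rs)).
  pose y := flatten (map arch (drop n rs)) ++ s.
  have Ux : universal B n x.
    have := universal_arches (all_subseq (take_subseq rs n) rs_arch).
    by rewrite size_takel.
  have def_w' : w = x ++ [::] ++ y.
    by rewrite def_w -{1}(cat_take_drop n rs) map_cat flatten_cat -catA.
  rewrite def_w' in Bw max_w.
  have := simon_maximal_infix Ux (universal0 y) Bw max_w.
  by rewrite subnn subn0 => /(simon_maximal0 cB).
set m := size rs.
have arches : (size (flatten (map arch rs)))%:R <= m%:R * simon_bound R k (n - m + 1).
  apply: arches_size_le (ltnW lt_mn) rs_arch (universal0 [::]) _ BsB _ _ => //.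
  by rewrite -def_w.
have rem : (size s).+1%:R <= simon_bound R k (n - m + 1).
  apply: (IHk _ Bs); first by move: cardB; rewrite (cardsD1 c) cB => -[].
  apply: simon_maximal_subset (subsetDl B [set c]) _.
  apply: simon_maximal_le (_ : n - m - 0 <= n - m + 1)%N _.
    by rewrite subn0 leq_addr.
  apply: simon_maximal_infix (universal_arches rs_arch) (universal0 [::]) _ _;
    by rewrite cats0 -def_w.
apply: le_trans (simon_bound_step R k lt_mn).
rewrite def_w size_cat -addnS natrD -[m.+1]addn1 natrD mulrDl mul1r.
exact: lerD arches rem.
Qed.

End InductionStep.

Lemma simon_maximal_size_le k (B : {set A}) n w : #|B| = k -> all [in B] w ->
  simon_maximal B n w -> (size w).+1%:R <= simon_bound R k n.
Proof.
elim: k B n w => [|k IHk] B n w cardB Bw max_w.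
  case: w Bw {max_w} => [_|a w /andP[aB _]]; first by rewrite /simon_bound expr0.
  by rewrite (cards0_eq cardB) inE in aB.
exact (simon_maximal_size_le_succ IHk cardB Bw max_w).
Qed.

End LongestWord.

Section SimonBoundRoot.
Variable R : realType.
Local Open Scope ring_scope.

Lemma simon_bound_root_lt k h ell : (0 < k)%N -> ell.+1%:R <= simon_bound R k h ->
  1 + k%:R * ((ell%:R : R) `^ k%:R^-1 - 2) < h%:R.
Proof.
move=> k_gt0; have k_pos : 0 < k%:R :> R by rewrite ltr0n.
rewrite /simon_bound; set c := _ / _ + 2 => le_ell.
have c_ge0 : 0 <= c := simon_base_ge0 R k h.
have root_lt : (ell%:R : R) `^ k%:R^-1 < c.
  have root_c : (c ^+ k) `^ k%:R^-1 = c.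
    by rewrite -powR_mulrn // -powRrM mulfV ?lt0r_neq0 // powRr1.
  rewrite -[X in _ < X]root_c; apply: gt0_ltr_powR.
  - by rewrite invr_gt0.
  - by rewrite nnegrE ler0n.
  - by rewrite nnegrE exprn_ge0.
  - by apply: lt_le_trans le_ell; rewrite ltr_nat.
have def_h : k%:R * (c - 2) = h%:R - 1 :> R.
  by rewrite /c addrK mulrCA divff ?mulr1 // lt0r_neq0.
move: root_lt; rewrite -(ltrD2r (-2)) -(ltr_pM2l k_pos) def_h.
set t := _ `^ _; set K := k%:R; set H := h%:R; lra.
Qed.

End SimonBoundRoot.

Lemma bigmax_seq_attained (T : eqType) (F : T -> nat) (r : seq T) :
  r != [::] -> exists2 x, x \in r & \max_(y <- r) F y = F x.
Proof.
elim: r => // a [|b r] IH _; first by exists a; rewrite ?inE ?big_seq1.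
rewrite big_cons; have [x xr ->] := IH isT.
have [_|_] := leqP (F a) (F x); first by exists x; rewrite // inE xr orbT.
by exists a; rewrite // inE eqxx.
Qed.

Lemma is_PT_height_exists (A : finType) (L : seq A -> Prop) N :
  is_nPT N L -> exists2 h, is_PT_height L h & h <= N.
Proof.
move=> L_N; have ex_PT : exists n, `[< is_nPT n L >] by exists N; apply/asboolP.
case: (ex_minnP ex_PT) => h /asboolP L_h min_h.
by exists h; [split=> // m /asboolP/min_h | apply/min_h/asboolP].
Qed.

Lemma is_nPT_size_le (A : finType) (L : seq A -> Prop) ell :
  (forall w, L w -> size w <= ell) -> is_nPT ell.+1 L.
Proof.
move=> le_L u v uv; split=> [Lu | Lv].
  by have <- : u = v by apply: simon_eq_size_lt uv; rewrite ltnS le_L.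
have vu : v = u by apply: simon_eq_size_lt (simon_eq_sym uv); rewrite ltnS le_L.
by rewrite -vu.
Qed.

Lemma longest_simon_maximal (A : finType) (L : seq A -> Prop) n w :
  is_nPT n L -> L w -> (forall v, L v -> size v <= size w) ->
  simon_maximal [set: A] n w.
Proof. by move=> L_n Lw longest_w w' _ ww'; apply/longest_w/(L_n _ _ ww'). Qed.

Theorem proposition7 (R : realType) (A : finType) (Ls : seq (seq A)) :
  (0 < #|A|)%N -> Ls != [::] ->
  let k := #|A| in
  let ell := \max_(w <- Ls) size w in
  exists h : nat,
    is_PT_height (fun w : seq A => w \in Ls) h /\
    (1 + k%:R * ((ell%:R : R) `^ (k%:R^-1) - 2) < (h%:R : R))%R /\
    (h <= ell.+1)%N.
Proof.
move=> A_gt0 Ls_ne k ell.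
have le_ell w : w \in Ls -> size w <= ell.
  by move=> wL; apply: (@leq_bigmax_seq _ Ls xpredT size w wL).
have [w0 w0L def_ell] := bigmax_seq_attained size Ls_ne.
have [h h_height le_h] := is_PT_height_exists (is_nPT_size_le le_ell).
exists h; split=> //; split=> //.
apply: simon_bound_root_lt A_gt0 _; rewrite /ell def_ell.
apply: simon_maximal_size_le (cardsT A) _ _.
  by apply/allP=> a _; rewrite finset.in_setT.
apply: longest_simon_maximal h_height.1 w0L _.
by move=> v /le_ell; rewrite /ell def_ell.
Qed.
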